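(* Fix $\delta\in(0,1)$. Let $t\ge1$ and integers $l_1,\dots,l_t$, and consider unit vectors $\mathbf a_{i,j}\in\mathbb R^m$, $i\in\{1,\dots,t\}$, $j\in\{1,\dots,l_i\}$, in general position, such that $\sum_{j}\mathbf a_{i,j}=0$ for each $i$, and $\mathbf a_{i,j}\perp\mathbf a_{i',j'}$ whenever $i\ne i'$. Let unit vectors $\mathbf v_1,\dots,\mathbf v_t\in\mathbb R^m$ be orthogonal to each other and to all $\mathbf a_{i,j}$. Then there are positive scalars $\alpha_i,\beta_i$, $i\in\{1,\dots,t\}$, such that the matrix $\mathbf A$ whose columns are the vectors $\alpha_i\mathbf a_{i,j}+\beta_i\mathbf v_i$ over all $i,j$ satisfies, for each $i\in\{1,\dots,t\}$, \[ \min_{|S|=k_i}\frac{\mathrm{Er}_{\mathbf A}(S)}{\mathrm{OPT}_{k_i}}\ge(1-\delta)\,l_i,\qquad\text{where }k_i=l_1+\dots+l_i-1. \]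
   Context: For a matrix $\mathbf A$ with $n$ columns $\mathbf a_1,\dots,\mathbf a_n$ and $S\subseteq\{1,\dots,n\}$, $\mathbf P_S$ is the orthogonal projection onto $\mathrm{span}\{\mathbf a_i:i\in S\}$, $\mathrm{Er}_{\mathbf A}(S)=\|\mathbf A-\mathbf P_S\mathbf A\|_F^2$, and $\mathrm{OPT}_k=\min_{\mathrm{rank}(\mathbf B)=k}\|\mathbf A-\mathbf B\|_F^2$. The minimum is over column index subsets $S$ of size $k_i$. *)

From HB Require Import structures.
From mathcomp Require Import all_boot all_order all_algebra.
From mathcomp Require Import classical_sets reals.
Set Implicit Arguments. Unset Strict Implicit. Unset Printing Implicit Defensive.
Import Order.TTheory GRing.Theory Num.Theory.
Local Open Scope ring_scope.
Local Open Scope classical_set_scope.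

Section Defs.
Variable R : realType.

Definition dotv (m : nat) (u w : 'cV[R]_m) : R := \sum_(k < m) u k 0 * w k 0.

Definition frob2 (p q : nat) (M : 'M[R]_(p, q)) : R :=
  \sum_(i < p) \sum_(j < q) M i j ^+ 2.

Definition orth_proj (r m : nat) (U : 'M[R]_(r, m)) : 'M[R]_m :=
  let B := row_base U in (B^T *m invmx (B *m B^T) *m B).

Variables (J : finType) (m : nat) (c : J -> 'cV[R]_m).

Definition colmx : 'M[R]_(m, #|J|) := \matrix_(r, j) c (enum_val j) r 0.

Definition spanmx (S : {set J}) : 'M[R]_(#|S|, m) :=
  \matrix_(r, q) c (@enum_val J (mem S) r) q 0.

Definition PS (S : {set J}) : 'M[R]_m := orth_proj (spanmx S).

Definition Er (S : {set J}) : R := frob2 (colmx - PS S *m colmx).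

Definition OPT (k : nat) : R :=
  inf [set x | exists B : 'M[R]_(m, #|J|), \rank B = k /\ x = frob2 (colmx - B)].

End Defs.

Definition lin_indep (R : realType) (I : finType) (m : nat) (f : I -> 'cV[R]_m)
  (S : {set I}) : Prop :=
  forall coef : I -> R, \sum_(j in S) coef j *: f j = 0 -> forall j, j \in S -> coef j = 0.

(* general position of the vectors a_{i,1..l_i} (whose sum is 0): any proper
   subfamily (equivalently any l_i - 1 of them) is linearly independent *)
Definition gen_pos (R : realType) (t : nat) (l : 'I_t -> nat) (m : nat)
  (a : forall i : 'I_t, 'I_(l i) -> 'cV[R]_m) : Prop :=
  forall (i : 'I_t) (S : {set 'I_(l i)}), (#|S| < l i)%N -> lin_indep (a i) S.

(* Take beta_i = eta^i and alpha_i = K beta_i with K large and eta small. Each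
   column c_q, q = (i, r), has a dual vector w_q = v_i / (l_i beta_i) + g_q / alpha_i,
   where g_q lies in span{a_(i,.)} and <g_q, a_(i,j)> = [j = r] - 1/l_i (such a g_q
   exists by general position); so <w_q, c_p> = [p = q], and for K large
   |w_q|^2 <= (1 + eps) / (l_i beta_i)^2.
   If |S| = k_i, some column c_q of the first k_i + 1 columns is not in S; as w_q is
   orthogonal to span S and <w_q, c_q> = 1, Er(S) >= 1 / |w_q|^2 >= (l_i beta_i)^2 / (1 + eps),
   because l_i beta_i decreases in i. Keeping the groups before i, removing the v_i
   component of group i (leaving rank l_i - 1, as the a_(i,.) sum to 0) and zeroing the
   later groups gives a rank-k_i matrix within l_i beta_i^2 (1 + eps) of A, the later
   groups being negligible. Hence the ratio is at least l_i / (1 + eps)^2, which is at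
   least (1 - delta) l_i for eps = delta / 4; the dual vectors also show OPT_(k_i) > 0. *)

From HB Require Import structures.
From mathcomp Require Import all_boot all_order all_algebra.
From mathcomp Require Import classical_sets reals.
From mathcomp Require Import ring lra.
From mathcomp Require boolp.
Import Order.TTheory GRing.Theory Num.Theory.
Local Open Scope ring_scope.

Section DotProduct.
Context {R : realType} {m : nat}.
Implicit Types u w : 'cV[R]_m.

Lemma dotvC u w : dotv u w = dotv w u.
Proof. by apply: eq_bigr => k _; rewrite mulrC. Qed.

Lemma dotvDl u1 u2 w : dotv (u1 + u2) w = dotv u1 w + dotv u2 w.
Proof. by rewrite /dotv -big_split; apply: eq_bigr => k _; rewrite mxE mulrDl. Qed.

Lemma dotvZl c u w : dotv (c *: u) w = c * dotv u w.
Proof. by rewrite /dotv mulr_sumr; apply: eq_bigr => k _; rewrite mxE mulrA. Qed.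

Lemma dotvBl u1 u2 w : dotv (u1 - u2) w = dotv u1 w - dotv u2 w.
Proof. by rewrite dotvDl -scaleN1r dotvZl mulN1r. Qed.

Lemma dotvDr u w1 w2 : dotv u (w1 + w2) = dotv u w1 + dotv u w2.
Proof. by rewrite dotvC dotvDl !(dotvC u). Qed.

Lemma dotvZr c u w : dotv u (c *: w) = c * dotv u w.
Proof. by rewrite dotvC dotvZl dotvC. Qed.

Lemma dotvBr u w1 w2 : dotv u (w1 - w2) = dotv u w1 - dotv u w2.
Proof. by rewrite dotvC dotvBl !(dotvC u). Qed.

Lemma dotv_suml (I : finType) (P : pred I) (F : I -> 'cV[R]_m) w :
  dotv (\sum_(x | P x) F x) w = \sum_(x | P x) dotv (F x) w.
Proof.
by rewrite /dotv exchange_big; apply: eq_bigr => k _; rewrite summxE mulr_suml.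
Qed.

Lemma dotv_sumr (I : finType) (P : pred I) (F : I -> 'cV[R]_m) w :
  dotv w (\sum_(x | P x) F x) = \sum_(x | P x) dotv w (F x).
Proof. by rewrite dotvC dotv_suml; apply: eq_bigr => x _; rewrite dotvC. Qed.

Lemma dotv0l w : dotv 0 w = 0.
Proof. by rewrite -(scale0r 0) dotvZl mul0r. Qed.

Lemma dotv0r w : dotv w 0 = 0.
Proof. by rewrite dotvC dotv0l. Qed.

Lemma dotv_ge0 u : 0 <= dotv u u.
Proof. by apply: sumr_ge0 => k _; rewrite -expr2 sqr_ge0. Qed.

Lemma dotv_eq0 u : dotv u u = 0 -> u = 0.
Proof.
have sq_ge0 k : true -> 0 <= u k 0 * u k 0 by rewrite -expr2 sqr_ge0.
move/(psumr_eq0P sq_ge0) => u0; apply/matrixP => k j; rewrite ord1 mxE.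
by have /eqP := u0 k isT; rewrite mulf_eq0 orbb => /eqP.
Qed.

Lemma dotv_gt0 u : u != 0 -> 0 < dotv u u.
Proof.
by move=> u0; rewrite lt_def dotv_ge0 andbT; apply: contra u0 => /eqP/dotv_eq0->.
Qed.

Lemma dotv_Cauchy_Schwarz u w : dotv u w ^+ 2 <= dotv u u * dotv w w.
Proof.
have [w0|wn0] := eqVneq w 0; first by rewrite w0 !dotv0r expr0n mulr0.
have wp : 0 < dotv w w by rewrite dotv_gt0.
have := dotv_ge0 (dotv w w *: u - dotv u w *: w).
rewrite !(dotvBl, dotvBr, dotvZl, dotvZr) (dotvC w u).
set a := dotv u u; set b := dotv u w; set c := dotv w w => H.
have : 0 <= c * (c * a - b ^+ 2) by rewrite expr2; lra.
by rewrite pmulr_rge0 // subr_ge0 mulrC.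
Qed.

End DotProduct.

Section FrobeniusNorm.
Context {R : realType}.

Lemma frob2_col_sum {p q} (M : 'M[R]_(p, q)) :
  frob2 M = \sum_(o < q) dotv (col o M) (col o M).
Proof.
rewrite /frob2 exchange_big; apply: eq_bigr => o _; apply: eq_bigr => k _.
by rewrite !mxE expr2.
Qed.

Lemma frob2_ge0 {p q} (M : 'M[R]_(p, q)) : 0 <= frob2 M.
Proof. by rewrite frob2_col_sum; apply: sumr_ge0 => o _; apply: dotv_ge0. Qed.

Lemma dotv_col_le_frob2 {p q} (M : 'M[R]_(p, q)) (o : 'I_q) :
  dotv (col o M) (col o M) <= frob2 M.
Proof.
rewrite frob2_col_sum (bigD1 o) //= lerDl.
by apply: sumr_ge0 => j _; apply: dotv_ge0.
Qed.

Lemma dotv_mulmx_le {p q} (M : 'M[R]_(p, q)) (x : 'cV[R]_q) :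
  dotv (M *m x) (M *m x) <= frob2 M * dotv x x.
Proof.
rewrite /frob2 /dotv mulr_suml; apply: ler_sum => r _.
have row_dot : (M *m x) r 0 = dotv (row r M)^T x.
  by rewrite mxE; apply: eq_bigr => k _; rewrite !mxE.
have row_norm : dotv (row r M)^T (row r M)^T = \sum_(k < q) M r k ^+ 2.
  by apply: eq_bigr => k _; rewrite !mxE expr2.
by rewrite row_dot -expr2 -row_norm; apply: dotv_Cauchy_Schwarz.
Qed.

Lemma dotv_trmx_mulmx p m (u : 'cV[R]_m) (M : 'M[R]_(p, m)) (y : 'cV[R]_p) :
  dotv u (M^T *m y) = \sum_(s < p) y s 0 * dotv u (row s M)^T.
Proof.
rewrite /dotv (eq_bigr (fun k => \sum_(s < p) u k 0 * (M s k * y s 0))); last first.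
  by move=> k _; rewrite mxE mulr_sumr; apply: eq_bigr => s _; rewrite mxE.
rewrite exchange_big; apply: eq_bigr => s _; rewrite mulr_sumr.
by apply: eq_bigr => k _; rewrite !mxE; ring.
Qed.

End FrobeniusNorm.

Section ColumnMatrix.
Context {R : realType} {J : finType} {m : nat}.
Implicit Types c : J -> 'cV[R]_m.

Lemma col_colmx c o : col o (colmx c) = c (enum_val o).
Proof. by apply/matrixP => r j; rewrite !mxE ord1. Qed.

Lemma colmxB c1 c2 : colmx c1 - colmx c2 = colmx (fun x => c1 x - c2 x).
Proof. by apply/matrixP => r j; rewrite !mxE. Qed.

Lemma frob2_colmx c : frob2 (colmx c) = \sum_x dotv (c x) (c x).
Proof.
rewrite frob2_col_sum (big_enum_val (fun x => dotv (c x) (c x))).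
by apply: eq_bigr => o _; rewrite col_colmx.
Qed.

Lemma colmx_mulmx c (x : 'cV[R]_#|J|) :
  colmx c *m x = \sum_(o < #|J|) x o 0 *: c (enum_val o).
Proof.
apply/matrixP => r j; rewrite ord1 !mxE summxE; apply: eq_bigr => o _.
by rewrite !mxE mulrC.
Qed.

Lemma row_spanmx c (S : {set J}) (s : 'I_#|S|) :
  (row s (spanmx c S))^T = c (enum_val s).
Proof. by apply/matrixP => r j; rewrite ord1 !mxE. Qed.

Lemma dotv_PS_eq0 c (S : {set J}) (w u : 'cV[R]_m) :
  (forall x, x \in S -> dotv w (c x) = 0) -> dotv w (PS c S *m u) = 0.
Proof.
move=> wS.
have : ((PS c S *m u)^T <= spanmx c S)%MS.
  rewrite /PS /orth_proj -!mulmxA trmx_mul trmxK.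
  by apply: submx_trans (submxMl _ _) _; rewrite eq_row_base.
case/submxP => D PSu; rewrite -[PS c S *m u]trmxK PSu trmx_mul dotv_trmx_mulmx.
by apply: big1 => s _; rewrite row_spanmx wS ?mulr0 // enum_valP.
Qed.

Lemma Er_ge_inv_dotv {c} {S : {set J}} {w : 'cV[R]_m} {q} :
  q \notin S -> (forall x, x \in S -> dotv w (c x) = 0) -> dotv w (c q) = 1 ->
  (dotv w w)^-1 <= Er c S.
Proof.
move=> qS wS wq.
set e := c q - PS c S *m c q.
have col_q : col (enum_rank q) (colmx c - PS c S *m colmx c) = e.
  by rewrite colE mulmxBl -mulmxA -!colE col_colmx enum_rankK.
have we : dotv w e = 1 by rewrite dotvBr wq dotv_PS_eq0 ?subr0.
have w0 : w != 0.
  by apply/eqP => w0; move: we; rewrite w0 dotv0l => /esym/eqP; rewrite oner_eq0.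
rewrite /Er; apply: le_trans (dotv_col_le_frob2 _ (enum_rank q)); rewrite col_q.
have := dotv_Cauchy_Schwarz w e; rewrite we expr1n.
by rewrite -ler_pdivrMl ?dotv_gt0 // mulr1.
Qed.
End ColumnMatrix.

Section LowRank.
Context {R : realType} {J : finType} {m : nat} {c : J -> 'cV[R]_m}.

Lemma OPT_le_frob2 {k} {B : 'M[R]_(m, #|J|)} :
  \rank B = k -> OPT c k <= frob2 (colmx c - B).
Proof.
move=> rB; apply: ge_inf; last by exists B.
by exists 0 => _ [B' [_ ->]]; apply: frob2_ge0.
Qed.

Context {w : J -> 'cV[R]_m}.
Hypothesis dual : forall p q, dotv (w q) (c p) = (p == q)%:R.

(* A kernel vector x of B satisfies x_o = <w_o, (A - B) x>, hence
   |x|^2 <= (\sum_o |w_o|^2) |(A - B) x|^2 <= (\sum_o |w_o|^2) |A - B|_F^2 |x|^2. *)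
Lemma frob2_sub_lowrank_ge (B : 'M[R]_(m, #|J|)) : (\rank B < #|J|)%N ->
  1 <= (\sum_x dotv (w x) (w x)) * frob2 (colmx c - B).
Proof.
move=> rB; have : kermx B^T != 0 by rewrite kermx_eq0 /row_free mxrank_tr neq_ltn rB.
case/rowV0Pn => z /sub_kermxP zB z0.
set x := z^T; set W := \sum_x _; set F := frob2 _.
have Bx : B *m x = 0 by rewrite -[B]trmxK -trmx_mul zB trmx0.
have xpos : 0 < dotv x x by rewrite dotv_gt0 // trmx_eq0.
set y := colmx c *m x.
have coord o : dotv (w (enum_val o)) y = x o 0.
  rewrite /y colmx_mulmx dotv_sumr (bigD1 o) //= dotvZr dual eqxx mulr1.
  rewrite big1 ?addr0 // => o' o'o; rewrite dotvZr dual (inj_eq enum_val_inj).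
  by rewrite (negbTE o'o) mulr0.
have x_le : dotv x x <= W * dotv y y.
  rewrite /W (big_enum_val (fun x => dotv (w x) (w x))) mulr_suml /=.
  have -> : dotv x x = \sum_(o < #|J|) dotv (w (enum_val o)) y ^+ 2.
    by apply: eq_bigr => o _; rewrite coord expr2.
  by apply: ler_sum => o _; apply: dotv_Cauchy_Schwarz.
have y_le : dotv y y <= F * dotv x x.
  by rewrite /y -[colmx c *m x]subr0 -Bx -mulmxBl; apply: dotv_mulmx_le.
have W0 : 0 <= W by apply: sumr_ge0 => o _; apply: dotv_ge0.
rewrite -(ler_pM2r xpos) mul1r -mulrA.
by apply: le_trans x_le (ler_wpM2l W0 y_le).
Qed.

Lemma OPT_gt0 {k} : (k < #|J|)%N -> (exists B : 'M[R]_(m, #|J|), \rank B = k) ->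
  0 < OPT c k.
Proof.
move=> kJ [B0 rB0]; pose W := \sum_x dotv (w x) (w x).
have one_le B : \rank B = k -> 1 <= W * frob2 (colmx c - B).
  by move=> rB; apply: frob2_sub_lowrank_ge; rewrite rB.
have Wpos : 0 < W.
  have := one_le B0 rB0; have := frob2_ge0 (colmx c - B0).
  have : 0 <= W by apply: sumr_ge0 => o _; apply: dotv_ge0.
  by rewrite le_eqVlt => /orP[/eqP <- _|//]; rewrite mul0r ler10.
apply: lt_le_trans (_ : W^-1 <= _); first by rewrite invr_gt0.
apply: lb_le_inf; first by exists (frob2 (colmx c - B0)), B0.
by move=> _ [B [rB ->]]; rewrite -[W^-1]mulr1 ler_pdivrMl //; apply: one_le.
Qed.

End LowRank.

Section RankByDuality.
Context {R : realType} {J : finType} {m : nat} (b d : J -> 'cV[R]_m) (T : {set J}).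
Hypothesis dual : forall x y, x \in T -> y \in T -> dotv (d x) (b y) = (x == y)%:R.
Hypothesis span : forall q, q \notin T ->
  exists coef : J -> R, b q = \sum_(y in T) coef y *: b y.

Lemma rank_spanmx_dual : \rank (spanmx b T) = #|T|.
Proof.
apply/eqP; rewrite eqn_leq rank_leq_row /=.
pose D := \matrix_(k < m, s < #|T|) d (enum_val s) k 0.
have unitD : spanmx b T *m D = 1%:M.
  apply/matrixP => s s'; rewrite !mxE.
  transitivity (dotv (d (enum_val s')) (b (enum_val s))).
    by apply: eq_bigr => k _; rewrite !mxE mulrC.
  by rewrite dual ?enum_valP // (inj_eq enum_val_inj) eq_sym.
by have := mxrankM_maxl (spanmx b T) D; rewrite unitD mxrank1.
Qed.

Lemma rank_colmx_dual : \rank (colmx b) = #|T|.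
Proof.
have rowT y : y \in T -> ((b y)^T <= spanmx b T)%MS.
  move=> yT; rewrite -[y](enum_rankK_in yT yT) -row_spanmx trmxK; exact: row_sub.
have rowJ q : ((b q)^T <= spanmx b T)%MS.
  have [/rowT //|/span [coef ->]] := boolP (q \in T).
  rewrite linear_sum /=; apply: summx_sub => y yT; rewrite linearZ /=.
  exact/scalemx_sub/rowT.
have row_colmx o : row o (colmx b)^T = (b (enum_val o))^T.
  by apply/matrixP => i j; rewrite ord1 !mxE.
rewrite -mxrank_tr -rank_spanmx_dual; apply/eqP; rewrite eqn_leq !mxrankS //.
  apply/row_subP => s; rewrite -[row s _]trmxK row_spanmx.
  by rewrite -(enum_rankK (enum_val s)) -row_colmx row_sub.
by apply/row_subP => o; rewrite row_colmx.
Qed.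

End RankByDuality.

Lemma ltn_ord_eqF {n} {i j : 'I_n} : (i < j)%N -> (i == j) = false.
Proof. by move=> ij; apply: contraTF ij => /eqP->; rewrite ltnn. Qed.

Lemma sum_tag (I : finType) (T_ : I -> finType) (V : nmodType)
  (P : pred I) (F : {i : I & T_ i} -> V) :
  \sum_(y | P (tag y)) F y = \sum_(i | P i) \sum_(j : T_ i) F (Tagged T_ j).
Proof.
rewrite (sig_big_dep P (fun _ _ => true) (fun i j => F (Tagged T_ j))).
by apply: eq_big => [[i j]|[i j] _] //=; rewrite andbT.
Qed.

Lemma card_tag (I : finType) (T_ : I -> finType) (P : pred I) :
  #|[set y : {i : I & T_ i} | P (tag y)]| = (\sum_(i | P i) #|T_ i|)%N.
Proof.
rewrite -sum1_card (eq_bigl (fun y => P (tag y))) => [|y]; last by rewrite inE.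
under [RHS]eq_bigr do rewrite -sum1_card.
rewrite (sig_big_dep P (fun _ _ => true) (fun _ _ => 1%N)).
by apply: eq_bigl => -[i j] /=; rewrite andbT.
Qed.

Section PrescribedInnerProducts.
Context {R : realType} {m : nat}.

(* The Gram matrix of an independent family is invertible. *)
Lemma lin_indep_prescribed_dotv (I : finType) (u : I -> 'cV[R]_m) (S : {set I})
    (y : I -> R) :
  lin_indep u S -> exists z : I -> R,
    forall j, j \in S -> dotv (\sum_(k in S) z k *: u k) (u j) = y j.
Proof.
move=> indep; have [->|[k0 k0S]] := set_0Vmem S.
  by exists (fun=> 0) => j; rewrite inE.
pose h := enum_rank_in k0S.
pose G : 'M[R]_#|S| := \matrix_(s, s') dotv (u (enum_val s)) (u (enum_val s')).
pose comb (z : 'rV[R]_#|S|) := \sum_(k in S) z 0 (h k) *: u k.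
have combG z j : j \in S -> (z *m G) 0 (h j) = dotv (comb z) (u j).
  move=> jS; rewrite mxE dotv_suml (big_enum_rank k0S) /=.
  by apply: eq_bigr => k kS; rewrite !mxE dotvZl !enum_rankK_in.
have unitG : G \in unitmx.
  rewrite -row_free_unit; apply/inj_row_free => z zG0.
  have orth j : j \in S -> dotv (comb z) (u j) = 0 by move=> jS; rewrite -combG // zG0 mxE.
  have comb0 : comb z = 0.
    apply: dotv_eq0; rewrite {2}/comb dotv_sumr big1 // => k kS.
    by rewrite dotvZr orth ?mulr0.
  apply/rowP => s; rewrite mxE -[s](enum_valK_in k0S).
  exact: indep comb0 _ (enum_valP s).
exists (fun k => (\row_s y (enum_val s) *m invmx G) 0 (h k)) => j jS.
by rewrite -combG // mulmxKV // mxE enum_rankK_in.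
Qed.

Lemma centered_dual_exists {n} {u : 'I_n -> 'cV[R]_m} :
  (forall S : {set 'I_n}, (#|S| < n)%N -> lin_indep u S) -> \sum_j u j = 0 ->
  forall r, exists z : 'I_n -> R,
    forall j, dotv (\sum_k z k *: u k) (u j) = (j == r)%:R - n%:R^-1.
Proof.
move=> gp sum0 r; have n_gt0 : (0 < n)%N by apply: leq_ltn_trans (ltn_ord r).
have small : (#|[set~ r]| < n)%N by rewrite cardsC1 card_ord prednK.
have [z hz] := @lin_indep_prescribed_dotv _ u _ (fun=> - n%:R^-1) (gp _ small).
exists (fun k => if k == r then 0 else z k).
set g := \sum_k _.
have gE : g = \sum_(k in [set~ r]) z k *: u k.
  rewrite big_mkcond; apply: eq_bigr => k _; rewrite !inE.
  by case: eqP => _; rewrite ?scale0r.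
pose err j := dotv g (u j) - ((j == r)%:R - n%:R^-1).
have err_off j : j != r -> err j = 0.
  by move=> jr; rewrite /err gE hz ?inE // (negbTE jr) sub0r subrr.
have err_sum : \sum_j err j = 0.
  have ind_sum : \sum_j ((j == r)%:R : R) = 1.
    by rewrite (bigD1 r) //= eqxx big1 ?addr0 // => j /negbTE ->.
  rewrite sumrB -dotv_sumr sum0 dotv0r sumrB ind_sum sumr_const card_ord.
  by rewrite -[_ *+ n]mulr_natr mulVf ?pnatr_eq0 -?lt0n // !subrr.
have err_r : err r = 0.
  by rewrite -err_sum (bigD1 r) //= big1 ?addr0 // => j; apply: err_off.
have err0 j : err j = 0 by have [->|/err_off] := eqVneq j r.
by move=> j; apply/eqP; rewrite -subr_eq0; apply/eqP/err0.
Qed.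

End PrescribedInnerProducts.

Lemma exists_parameters {R : realFieldType} {eps G N : R} :
  0 < eps <= 1 -> 0 <= G -> 1 <= N ->
  exists K eta, [/\ 0 < K, G * N ^+ 2 <= eps * K ^+ 2, 0 < eta,
    N * eta <= 1 & N * (K ^+ 2 + 1) * eta ^+ 2 <= eps].
Proof.
move=> /andP[eps_gt0 eps_le1] G_ge0 N_ge1.
pose K := 1 + G * N ^+ 2 / eps; pose D := N * (K ^+ 2 + 1).
have K_ge1 : 1 <= K.
  by rewrite lerDl; exact: divr_ge0 (mulr_ge0 G_ge0 (sqr_ge0 N)) (ltW eps_gt0).
have D_ge1 : 1 <= D by rewrite /D; have := sqr_ge0 K; nra.
have D_gt0 : 0 < D by lra.
exists K, (eps / D); split; first lra.
- have epsK : eps * K = eps + G * N ^+ 2 by rewrite /K; field; rewrite gt_eqF.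
  have : eps * K <= eps * K ^+ 2.
    by rewrite ler_pM2l // expr2; exact: ler_peMl (le_trans ler01 K_ge1) K_ge1.
  lra.
- by rewrite divr_gt0.
- rewrite mulrA ler_pdivrMr // mul1r /D; have := sqr_ge0 K; nra.
- have eta_le1 : eps / D <= 1 by rewrite ler_pdivrMr // mul1r; lra.
  rewrite -/D expr2 mulrA [D * _]mulrC mulfVK ?gt_eqF //.
  exact: ler_piMr (ltW eps_gt0) eta_le1.
Qed.

Section Construction.
Context {R : realType} {t : nat} {l : 'I_t -> nat} {m : nat}.
Context {a : forall i : 'I_t, 'I_(l i) -> 'cV[R]_m} {v : 'I_t -> 'cV[R]_m}.
Hypotheses (l_gt0 : forall i, (0 < l i)%N) (ha_gp : gen_pos a)
  (ha_sum : forall i, \sum_(j < l i) a i j = 0)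
  (ha_unit : forall i j, dotv (a i j) (a i j) = 1)
  (ha_orth : forall i i' j j', i != i' -> dotv (a i j) (a i' j') = 0)
  (hv_unit : forall i, dotv (v i) (v i) = 1)
  (hv_orth : forall i i', i != i' -> dotv (v i) (v i') = 0)
  (hva : forall i i' j, dotv (v i) (a i' j) = 0).

Local Notation idx := {i : 'I_t & 'I_(l i)}.
Local Notation n := #|{: idx}|.

Lemma exists_tagged_centered_dual (q : idx) : exists g : 'cV[R]_m,
  (forall y : idx, dotv g (a (tag y) (tagged y)) =
    if tag y == tag q then (y == q)%:R - (l (tag q))%:R^-1 else 0) /\
  (forall i, dotv g (v i) = 0).
Proof.
case: q => i r; have [z hz] := centered_dual_exists (ha_gp i) (ha_sum i) r.
exists (\sum_k z k *: a i k); split => [[i' j]|i'] /=; last first.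
  by rewrite dotv_suml big1 // => k _; rewrite dotvZl dotvC hva mulr0.
have [ii'|ii'] := eqVneq i' i; first by subst i'; rewrite hz eq_Tagged.
by rewrite dotv_suml big1 // => k _; rewrite dotvZl ha_orth ?mulr0 // eq_sym.
Qed.

Context {g : idx -> 'cV[R]_m}.
Hypotheses (hga : forall q y, dotv (g q) (a (tag y) (tagged y)) =
    if tag y == tag q then (y == q)%:R - (l (tag q))%:R^-1 else 0)
  (hgv : forall q i, dotv (g q) (v i) = 0).

Context {eps G K eta : R}.
Hypotheses (eps_gt0 : 0 < eps) (hgG : forall q, dotv (g q) (g q) <= G)
  (K_gt0 : 0 < K) (GK : G * n%:R ^+ 2 <= eps * K ^+ 2)
  (eta_gt0 : 0 < eta) (n_eta : n%:R * eta <= 1)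
  (eta_small : n%:R * (K ^+ 2 + 1) * eta ^+ 2 <= eps).

Definition beta (i : 'I_t) : R := eta ^+ i.
Definition alpha (i : 'I_t) : R := K * beta i.
Definition cols (p : idx) : 'cV[R]_m :=
  alpha (tag p) *: a (tag p) (tagged p) + beta (tag p) *: v (tag p).
Definition dual (q : idx) : 'cV[R]_m :=
  ((l (tag q))%:R * beta (tag q))^-1 *: v (tag q) + (alpha (tag q))^-1 *: g q.

Lemma lR_gt0 i : 0 < (l i)%:R :> R.
Proof. by rewrite ltr0n. Qed.

Lemma beta_gt0 i : 0 < beta i.
Proof. exact: exprn_gt0. Qed.

Lemma beta_ge0 i : 0 <= beta i.
Proof. exact: ltW (beta_gt0 i). Qed.

Lemma alpha_gt0 i : 0 < alpha i.
Proof. by rewrite mulr_gt0 ?beta_gt0. Qed.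

Lemma dotv_v_v i i' : dotv (v i) (v i') = (i == i')%:R.
Proof. by have [<-|/hv_orth] := eqVneq i i'. Qed.

Lemma dotv_dual_a q y : dotv (dual q) (a (tag y) (tagged y)) =
  if tag y == tag q then (alpha (tag q))^-1 * ((y == q)%:R - (l (tag q))%:R^-1) else 0.
Proof. by rewrite dotvDl !dotvZl hva mulr0 add0r hga; case: ifP; rewrite ?mulr0. Qed.

Lemma dotv_dual_v q i :
  dotv (dual q) (v i) = ((l (tag q))%:R * beta (tag q))^-1 * (tag q == i)%:R.
Proof. by rewrite dotvDl !dotvZl dotv_v_v hgv mulr0 addr0. Qed.

Lemma dotv_dual_cols p q : dotv (dual q) (cols p) = (p == q)%:R.
Proof.
rewrite dotvDr !dotvZr dotv_dual_a dotv_dual_v eq_sym.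
have [tpq|tpq] := eqVneq (tag q) (tag p); last first.
  by rewrite !mulr0 add0r; case: eqP => // pq; rewrite pq eqxx in tpq.
have lq := lR_gt0 (tag q); have bq := beta_gt0 (tag q).
rewrite -tpq /alpha mulr1; field.
by rewrite !gt_eqF.
Qed.

Lemma card_tag_ord (P : pred 'I_t) :
  #|[set y : idx | P (tag y)]| = (\sum_(i | P i) l i)%N.
Proof.
by rewrite (@card_tag _ (fun i => 'I_(l i))); apply: eq_bigr => i _; rewrite card_ord.
Qed.

Lemma l_le_card i : (l i <= n)%N.
Proof.
by have := max_card [set y : idx | tag y == i]; rewrite (card_tag_ord (pred1 i)) big_pred1_eq.
Qed.

Lemma dotv_dual_le q :
  dotv (dual q) (dual q) <= (1 + eps) * (((l (tag q))%:R * beta (tag q)) ^+ 2)^-1.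
Proof.
rewrite /dual !(dotvDl, dotvDr, dotvZl, dotvZr) hv_unit hgv dotvC hgv.
rewrite !mulr0 !addr0 add0r mulr1 /alpha.
set L := (l (tag q))%:R; set b := beta (tag q); set gg := dotv (g q) (g q).
have L_gt0 : 0 < L := lR_gt0 _; have b_gt0 : 0 < b := beta_gt0 _.
have gL : gg * L ^+ 2 <= eps * K ^+ 2.
  have Ln : L <= n%:R by rewrite ler_nat l_le_card.
  apply: le_trans GK; apply: ler_pM; [exact: dotv_ge0 | exact: sqr_ge0 | exact: hgG |].
  by rewrite ler_pXn2r ?nnegrE ?(ltW L_gt0) ?(le_trans (ltW L_gt0) Ln).
have -> : (L * b)^-1 / (L * b) + (K * b)^-1 * ((K * b)^-1 * gg) =
    ((L * b) ^+ 2)^-1 + gg * L ^+ 2 / K ^+ 2 * ((L * b) ^+ 2)^-1.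
  by field; rewrite !gt_eqF.
rewrite mulrDl mul1r lerD2l; apply: ler_wpM2r; first by rewrite invr_ge0 sqr_ge0.
by rewrite ler_pdivrMr ?exprn_gt0.
Qed.

Definition prefix_rank (i : 'I_t) : nat := (\sum_(i' < t | (i' <= i)%N) l i').-1.

Lemma card_prefix (i : 'I_t) : #|[set y : idx | (tag y <= i)%N]| = (prefix_rank i).+1.
Proof.
rewrite (card_tag_ord (fun i' => (i' <= i)%N)) prednK // (bigD1 i) //=.
exact: leq_trans (l_gt0 i) (leq_addr _ _).
Qed.

Lemma prefix_rank_lt i : (prefix_rank i < n)%N.
Proof. by rewrite -ltnS -card_prefix ltnS max_card. Qed.

Lemma beta_ltn (i j : 'I_t) : (i < j)%N -> beta j <= eta * beta i.
Proof.
move=> ij; have n1 : 1 <= n%:R :> R by rewrite ler1n (leq_trans (l_gt0 i)) ?l_le_card.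
have eta1 : eta <= 1 := le_trans (ler_peMl (ltW eta_gt0) n1) n_eta.
by rewrite /beta -exprS; apply: ler_wiXn2l (ltW eta_gt0) eta1 _ _ ij.
Qed.

Lemma lbeta_le (i j : 'I_t) : (j <= i)%N -> (l i)%:R * beta i <= (l j)%:R * beta j.
Proof.
rewrite leq_eqVlt => /orP[/eqP/val_inj -> //|ji].
apply: le_trans (_ : n%:R * (eta * beta j) <= _).
  apply: ler_pM; [exact: ler0n | exact: beta_ge0 | | exact: beta_ltn].
  by rewrite ler_nat l_le_card.
rewrite mulrA; apply: le_trans (ler_piMl (beta_ge0 j) n_eta) _.
by apply: ler_peMl; rewrite ?ler1n ?l_gt0 ?beta_ge0.
Qed.

Lemma Er_cols_ge {i : 'I_t} {S : {set idx}} : #|S| = prefix_rank i ->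
  ((l i)%:R * beta i) ^+ 2 / (1 + eps) <= Er cols S.
Proof.
move=> cardS.
have [q qi qS] : exists2 q : idx, (tag q <= i)%N & q \notin S.
  have /subsetPn[q] : ~~ ([set y : idx | (tag y <= i)%N] \subset S).
    by apply/negP => /subset_leq_card; rewrite card_prefix cardS ltnn.
  by rewrite inE; exists q.
have dualS x : x \in S -> dotv (dual q) (cols x) = 0.
  by move=> xS; rewrite dotv_dual_cols; case: eqP xS qS => // -> ->.
have Er_q : (dotv (dual q) (dual q))^-1 <= Er cols S.
  by apply: Er_ge_inv_dotv qS dualS _; rewrite dotv_dual_cols eqxx.
apply: le_trans Er_q.
set X := (l (tag q))%:R * beta (tag q).
have X_gt0 : 0 < X by rewrite mulr_gt0 ?lR_gt0 ?beta_gt0.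
have eps1 : 0 < 1 + eps by rewrite addr_gt0.
apply: le_trans (_ : ((1 + eps) * (X ^+ 2)^-1)^-1 <= _).
  rewrite invfM invrK mulrC; apply: ler_wpM2l; first by rewrite invr_ge0 ltW.
  by rewrite ler_pXn2r ?nnegrE ?(ltW X_gt0) ?lbeta_le ?mulr_ge0 ?ler0n ?beta_ge0.
have dual_gt0 : 0 < dotv (dual q) (dual q).
  rewrite dotv_gt0 //; apply: contra_eq_neq (dotv_dual_cols q q) => ->.
  by rewrite dotv0l eqxx eq_sym oner_neq0.
by rewrite lef_pV2 ?posrE ?dotv_dual_le // mulr_gt0 ?invr_gt0 ?exprn_gt0.
Qed.

Definition trunc (i : 'I_t) (y : idx) : 'cV[R]_m :=
  if (tag y < i)%N then cols y
  else if tag y == i then alpha i *: a (tag y) (tagged y) else 0.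

Lemma truncE (i : 'I_t) (y : idx) : (tag y <= i)%N ->
  trunc i y = cols y - (tag y == i)%:R *: (beta i *: v i).
Proof.
rewrite /trunc leq_eqVlt => /orP[/eqP/val_inj tyi|lt]; last first.
  by rewrite lt ltn_ord_eqF // scale0r subr0.
by rewrite -tyi ltnn eqxx scale1r /cols addrK.
Qed.

Lemma dotv_dual_trunc (i : 'I_t) (x y : idx) : (tag y <= i)%N ->
  dotv (dual x) (trunc i y) = (y == x)%:R - (tag y == i)%:R * (tag x == i)%:R / (l i)%:R.
Proof.
move=> yi; rewrite truncE // dotvBr dotv_dual_cols !dotvZr dotv_dual_v; congr (_ - _).
have [<-|_] := eqVneq (tag x) i; last by rewrite /= mulr0n !(mulr0, mul0r).
have l0 := lR_gt0 (tag x); have b0 := beta_gt0 (tag x).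
by rewrite !mulr1; field; rewrite !gt_eqF.
Qed.

Lemma group_sum_trunc (i : 'I_t) : \sum_(y | tag y == i) trunc i y = 0.
Proof.
rewrite (@sum_tag _ (fun i => 'I_(l i)) _ (pred1 i)) big_pred1_eq.
under eq_bigr do rewrite /trunc /= ltnn eqxx.
by rewrite -scaler_sumr ha_sum scaler0.
Qed.

(* [T] omits the column [q0] of group [i], which is minus the sum of the other
   columns of that group; [d] is a dual family of the remaining columns. *)
Lemma rank_trunc (i : 'I_t) : \rank (colmx (trunc i)) = prefix_rank i.
Proof.
pose q0 : idx := Tagged (fun i => 'I_(l i)) (Ordinal (l_gt0 i)).
pose T := [set y : idx | (tag y <= i)%N] :\ q0.
have inT y : (y \in T) = (y != q0) && (tag y <= i)%N by rewrite !inE.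
have cardT : #|T| = prefix_rank i.
  have q0A : q0 \in [set y : idx | (tag y <= i)%N] by rewrite inE /=.
  by apply/eq_add_S; rewrite -card_prefix [RHS](cardsD1 q0) q0A.
pose d (y : idx) := if (tag y < i)%N then dual y else dual y - dual q0.
rewrite -cardT; apply: (rank_colmx_dual _ d) => [x y|q].
  rewrite !inT => /andP[xq0 xi] /andP[yq0 yi]; rewrite /d eq_sym.
  case: ltnP => [xlt|].
    by rewrite dotv_dual_trunc // (ltn_ord_eqF xlt) /= mulr0 mul0r subr0.
  move=> ix; have tx : tag x = i by apply/val_inj/eqP; rewrite eqn_leq xi.
  by rewrite dotvBl !dotv_dual_trunc // tx eqxx (negbTE yq0) opprB addrA subrK subr0.
rewrite inT negb_and negbK => /orP[/eqP->|]; last first.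
  rewrite -ltnNge => iq; exists (fun=> 0); rewrite big1 => [|y _]; last by rewrite scale0r.
  by rewrite /trunc ltnNge ltnW // eq_sym ltn_ord_eqF.
exists (fun y => - (tag y == i)%:R).
have := group_sum_trunc i; rewrite (bigD1 q0) //= => /eqP; rewrite addr_eq0 => /eqP ->.
rewrite -sumrN big_mkcond [RHS]big_mkcond; apply: eq_bigr => y _.
rewrite inT; case: (boolP (tag y == i)) => [/eqP tyi|_] /=.
  by rewrite tyi leqnn andbT scaleN1r; case: (y != q0).
by rewrite oppr0 scale0r; case: ifP.
Qed.

Lemma dotv_cols y : dotv (cols y) (cols y) = (K ^+ 2 + 1) * beta (tag y) ^+ 2.
Proof.
rewrite /cols !(dotvDl, dotvDr, dotvZl, dotvZr) ha_unit hv_unit hva dotvC hva /alpha.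
by ring.
Qed.

Lemma dotv_cols_sub_trunc_le (i : 'I_t) (y : idx) :
  dotv (cols y - trunc i y) (cols y - trunc i y) <=
  (tag y == i)%:R * beta i ^+ 2 + (K ^+ 2 + 1) * (eta * beta i) ^+ 2.
Proof.
have tail_ge0 : 0 <= (K ^+ 2 + 1) * (eta * beta i) ^+ 2.
  by rewrite mulr_ge0 ?sqr_ge0 ?addr_ge0 ?sqr_ge0.
have [iy|yi] := ltnP i (tag y).
  rewrite /trunc ltnNge ltnW // eq_sym ltn_ord_eqF //= subr0 mul0r add0r dotv_cols.
  apply: ler_wpM2l; first by rewrite addr_ge0 ?sqr_ge0.
  by rewrite ler_pXn2r ?nnegrE ?beta_ltn ?beta_ge0 ?mulr_ge0 ?beta_ge0 ?(ltW eta_gt0).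
rewrite truncE // opprB addrC subrK -[leLHS]addr0 lerD //.
rewrite !(dotvZl, dotvZr) hv_unit mulr1 expr2.
by case: (tag y == i); rewrite ?mul0r ?mul1r.
Qed.

Lemma frob2_sub_trunc_le (i : 'I_t) :
  frob2 (colmx cols - colmx (trunc i)) <= (l i)%:R * beta i ^+ 2 * (1 + eps).
Proof.
rewrite colmxB frob2_colmx.
apply: le_trans (ler_sum _ (fun y _ => dotv_cols_sub_trunc_le i y)) _.
have group_card : \sum_(y : idx) ((tag y == i)%:R : R) = (l i)%:R.
  rewrite (eq_bigr (fun y : idx => if tag y == i then 1 else 0)) => [|y _]; last first.
    by case: (_ == _).
  rewrite -big_mkcond (@sum_tag _ (fun i => 'I_(l i)) _ (pred1 i)) big_pred1_eq.
  by rewrite sumr_const card_ord.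
have tail_sum : \sum_(y : idx) (K ^+ 2 + 1) * (eta * beta i) ^+ 2 =
    (K ^+ 2 + 1) * (eta * beta i) ^+ 2 * n%:R by rewrite sumr_const mulr_natr.
rewrite big_split /= -mulr_suml group_card tail_sum mulrDr mulr1 lerD2l.
apply: le_trans (_ : eps * beta i ^+ 2 <= _).
  rewrite (_ : _ * _ = n%:R * (K ^+ 2 + 1) * eta ^+ 2 * beta i ^+ 2); last first.
    by rewrite exprMn; ring.
  by apply: ler_wpM2r; [exact: sqr_ge0 | exact: eta_small].
rewrite (_ : _ * _ * eps = (l i)%:R * (eps * beta i ^+ 2)); last by ring.
apply: ler_peMl; [exact: mulr_ge0 (ltW eps_gt0) (sqr_ge0 _) | by rewrite ler1n].
Qed.

Lemma Er_div_OPT_ge {i : 'I_t} {S : {set idx}} : #|S| = prefix_rank i ->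
  (l i)%:R / (1 + eps) ^+ 2 <= Er cols S / OPT cols (prefix_rank i).
Proof.
move=> cardS; have rk := rank_trunc i.
have OPT_pos : 0 < OPT cols (prefix_rank i) :=
  OPT_gt0 dotv_dual_cols (prefix_rank_lt i) (ex_intro _ _ rk).
have OPT_le := le_trans (OPT_le_frob2 rk) (frob2_sub_trunc_le i).
have eps1 : 0 < 1 + eps by rewrite addr_gt0.
rewrite ler_pdivlMr //; apply: le_trans _ (Er_cols_ge cardS).
apply: le_trans (ler_wpM2l _ OPT_le) _.
  by rewrite divr_ge0 ?ler0n ?exprn_ge0 // ltW.
have l0 := lR_gt0 i; have b0 := beta_gt0 i.
rewrite [leLHS](_ : _ = ((l i)%:R * beta i) ^+ 2 / (1 + eps)) //.
by field; rewrite !gt_eqF.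
Qed.

End Construction.

Theorem lemma4 (R : realType) (delta : R) (hdelta : 0 < delta < 1)
  (t : nat) (ht : (1 <= t)%N) (l : 'I_t -> nat) (hl : forall i, (0 < l i)%N)
  (m : nat) (a : forall i : 'I_t, 'I_(l i) -> 'cV[R]_m) (v : 'I_t -> 'cV[R]_m)
  (ha_unit : forall i j, dotv (a i j) (a i j) = 1)
  (ha_gp : gen_pos a)
  (ha_sum : forall i, \sum_(j < l i) a i j = 0)
  (ha_orth : forall i i' j j', i != i' -> dotv (a i j) (a i' j') = 0)
  (hv_unit : forall i, dotv (v i) (v i) = 1)
  (hv_orth : forall i i', i != i' -> dotv (v i) (v i') = 0)
  (hva : forall i i' j, dotv (v i) (a i' j) = 0) :
  exists alpha beta : 'I_t -> R,
    (forall i, 0 < alpha i /\ 0 < beta i) /\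
    let cols : {i : 'I_t & 'I_(l i)} -> 'cV[R]_m :=
      fun p => alpha (tag p) *: a (tag p) (tagged p) + beta (tag p) *: v (tag p) in
    forall i : 'I_t,
      let k := (\sum_(i' < t | (i' <= i)%N) l i').-1 in
      forall S : {set {i : 'I_t & 'I_(l i)}}, #|S| = k ->
        (1 - delta) * (l i)%:R <= Er cols S / OPT cols k.
Proof.
have [delta_gt0 delta_lt1] := andP hdelta.
have [g g_dual] := boolp.choice (exists_tagged_centered_dual ha_gp ha_sum ha_orth hva).
have hga q := (g_dual q).1; have hgv q := (g_dual q).2.
pose G := \sum_q dotv (g q) (g q).
have hgG q : dotv (g q) (g q) <= G.
  by rewrite [G](bigD1 q) //= lerDl sumr_ge0 // => y _; apply: dotv_ge0.
pose N := #|{: {i : 'I_t & 'I_(l i)}}|%:R : R.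
have N_ge1 : 1 <= N.
  by rewrite ler1n (leq_trans (hl (Ordinal ht))) ?l_le_card.
have eps_range : 0 < delta / 4 <= 1 by apply/andP; split; lra.
have G_ge0 : 0 <= G by apply: sumr_ge0 => q _; apply: dotv_ge0.
have [K [eta [K_gt0 GK eta_gt0 N_eta eta_small]]] :=
  exists_parameters eps_range G_ge0 N_ge1.
exists (@alpha _ _ K eta), (@beta _ _ eta); split.
  by move=> i; rewrite alpha_gt0 ?beta_gt0.
move=> cols i k S cardS.
have eps_gt0 : 0 < delta / 4 by lra.
apply: le_trans _ (Er_div_OPT_ge hl ha_sum ha_unit hv_unit hv_orth hva hga hgv
  eps_gt0 hgG K_gt0 GK eta_gt0 N_eta eta_small cardS).
rewrite mulrC ler_pdivlMr ?exprn_gt0 ?addr_gt0 // -mulrA.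
by apply: ler_piMr; [exact: ler0n | nra].
Qed.
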